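(* Let $\Theta$ and $\Omega=\{\omega_1,\dots,\omega_N\}$ be finite sets and $\rho:2^\Omega\to2^\Theta$ a refining, with induced partition $\Pi_i=\rho(\{\omega_i\})$, $i=1,\dots,N$, of $\Theta$. For each $i$ let $Bel_i$ be a belief function on $\Pi_i$ with mass $m_i$, and let $\overrightarrow{Bel_i}$ be its conditional embedding into $\Theta$. Let $\overrightarrow{Bel}=\overrightarrow{Bel_1}\oplus\cdots\oplus\overrightarrow{Bel_N}$ (Dempster's rule). Then (1) every focal element of $\overrightarrow{Bel}$ is of the form $\bigcup_{i=1}^N e_i$ where, for each $i$, $e_i$ is a focal element of $Bel_i$; and (2) the marginal of $\overrightarrow{Bel}$ on $\Omega$ is the vacuous belief function on $\Omega$ (the one with mass $1$ on $\Omega$).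
   Context: A refining $\rho:2^\Omega\to2^\Theta$ satisfies $\rho(\{\omega\})\ne\emptyset$ for all $\omega$, $\rho(\{\omega\})\cap\rho(\{\omega'\})=\emptyset$ for $\omega\ne\omega'$, $\bigcup_\omega\rho(\{\omega\})=\Theta$, and $\rho(B)=\bigcup_{\omega\in B}\rho(\{\omega\})$. Outer reduction: $\bar\rho(A)=\{\omega\in\Omega:\rho(\{\omega\})\cap A\ne\emptyset\}$ for $A\subseteq\Theta$. Mass functions $m:2^S\to[0,1]$, $m(\emptyset)=0$, $\sum m=1$; focal elements have positive mass; $Bel(A)=\sum_{B\subseteq A}m(B)$. Dempster's rule: $m_\oplus(A)\propto\sum_{B\cap C=A}m_1(B)m_2(C)$ for $A\ne\emptyset$, normalised to sum to $1$. The conditional embedding of a mass $m$ on $\Pi_i$ into $\Theta$ assigns mass $m(E)$ to $E\cup(\Theta\setminus\Pi_i)$ for each $E\subseteq\Pi_i$ and $0$ to all other subsets of $\Theta$. The marginal on $\Omega$ of a mass $m$ on $\Theta$ is $m\!\upharpoonright_\Omega(B)=\sum_{A\subseteq\Theta:\bar\rho(A)=B}m(A)$ for $B\subseteq\Omega$. *)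

From HB Require Import structures.
From mathcomp Require Import all_boot all_order all_algebra.
Set Implicit Arguments. Unset Strict Implicit. Unset Printing Implicit Defensive.
Import Order.TTheory GRing.Theory Num.Theory.
Local Open Scope ring_scope.

Section DS.
Variable R : realFieldType.

(* A refining given by its values on singletons: rho w = rho({w}). *)
Definition refining (Omega Theta : finType) (rho : Omega -> {set Theta}) : Prop :=
  [/\ forall w, rho w != set0,
      forall w w', w != w' -> [disjoint rho w & rho w'] &
      \bigcup_(w : Omega) rho w = [set: Theta]].

Definition refine_set (Omega Theta : finType) (rho : Omega -> {set Theta})
  (B : {set Omega}) : {set Theta} := \bigcup_(w in B) rho w.

Definition outer_red (Omega Theta : finType) (rho : Omega -> {set Theta})
  (A : {set Theta}) : {set Omega} := [set w | rho w :&: A != set0].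

(* A mass function on the frame S (a subset of Theta), represented as a function
   on subsets of Theta vanishing outside 2^S. *)
Definition is_mass (Theta : finType) (S : {set Theta}) (m : {set Theta} -> R) : Prop :=
  [/\ m set0 = 0,
      forall A : {set Theta}, 0 <= m A,
      forall A : {set Theta}, ~~ (A \subset S) -> m A = 0 &
      \sum_(A : {set Theta} | A \subset S) m A = 1].

Definition focal (Theta : finType) (m : {set Theta} -> R) (A : {set Theta}) : Prop :=
  0 < m A.

Definition Bel (Theta : finType) (m : {set Theta} -> R) (A : {set Theta}) : R :=
  \sum_(B : {set Theta} | B \subset A) m B.

Definition dempster_unnorm (Theta : finType) (m1 m2 : {set Theta} -> R)
  (A : {set Theta}) : R :=
  \sum_(B : {set Theta}) \sum_(C : {set Theta} | B :&: C == A) m1 B * m2 C.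

Definition dempster (Theta : finType) (m1 m2 : {set Theta} -> R)
  (A : {set Theta}) : R :=
  if A == set0 then 0
  else dempster_unnorm m1 m2 A /
       \sum_(A' : {set Theta} | A' != set0) dempster_unnorm m1 m2 A'.

Definition vacuous (Theta : finType) (A : {set Theta}) : R :=
  if A == [set: Theta] then 1 else 0.

Definition cond_embed (Theta : finType) (Pi : {set Theta}) (m : {set Theta} -> R)
  (A : {set Theta}) : R :=
  \sum_(E : {set Theta} | (E \subset Pi) && (E :|: ~: Pi == A)) m E.

(* Dempster combination of a family indexed by Omega, in the order of enum Omega
   (vacuous is the neutral element; Dempster's rule is commutative/associative). *)
Definition dempster_all (Omega Theta : finType) (M : Omega -> {set Theta} -> R) :
  {set Theta} -> R :=
  foldr (fun i acc => dempster (M i) acc) (@vacuous Theta) (enum Omega).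

Definition marginal (Omega Theta : finType) (rho : Omega -> {set Theta})
  (m : {set Theta} -> R) (B : {set Omega}) : R :=
  \sum_(A : {set Theta} | outer_red rho A == B) m A.

End DS.

From HB Require Import structures.
From mathcomp Require Import all_boot all_order all_algebra.
Set Implicit Arguments. Unset Strict Implicit. Unset Printing Implicit Defensive.
Import Order.TTheory GRing.Theory Num.Theory.
Local Open Scope ring_scope.

(* Combine the conditional embeddings one block at a time.  By induction every
   focal element of the partial combination over the blocks i in s is
   \bigcup_j e_j with e_j focal for m_j when j is in s and e_j = Pi_j otherwise.
   Intersecting such a set with E :|: ~: Pi_i, for E focal for m_i, only replaces
   e_i = Pi_i by E, because the other e_j lie in blocks disjoint from Pi_i.  As
   the e_j are nonempty, no intersection is empty: Dempster's rule never meets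
   conflict and needs no normalisation, which gives (1).  Each such union meets
   every block, so its outer reduction is Omega, which gives (2). *)

Section MassFunctions.
Variables (R : realFieldType) (T : finType).
Implicit Types (m : {set T} -> R) (S A B C E : {set T}).

Definition prob_mass m := (forall A, 0 <= m A) /\ \sum_A m A = 1.

Lemma is_mass_focal S m E : is_mass S m -> focal m E -> E \subset S /\ E != set0.
Proof.
case=> m0 _ m_out _ mE_gt0; split.
  by apply: contraTT mE_gt0 => /m_out ->; rewrite ltxx.
by apply: contraTneq mE_gt0 => ->; rewrite m0 ltxx.
Qed.

Lemma focalN_eq0 m A : 0 <= m A -> ~ focal m A -> m A = 0.
Proof. by move=> m_ge0 /negP; rewrite /focal -leNgt => m_le0; apply/le_anti/andP. Qed.

Lemma dempster_unnorm_ge0 (m1 m2 : {set T} -> R) A :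
  (forall B, 0 <= m1 B) -> (forall C, 0 <= m2 C) -> 0 <= dempster_unnorm m1 m2 A.
Proof.
move=> m1_ge0 m2_ge0; apply: sumr_ge0 => B _; apply: sumr_ge0 => C _.
exact: mulr_ge0.
Qed.

Lemma sum_dempster_unnorm (m1 m2 : {set T} -> R) :
  \sum_A dempster_unnorm m1 m2 A = (\sum_B m1 B) * (\sum_C m2 C).
Proof.
rewrite exchange_big mulr_suml; apply: eq_bigr => B _.
by rewrite mulr_sumr [RHS](partition_big (setI B) xpredT).
Qed.

Lemma dempster_unnorm_focal (m1 m2 : {set T} -> R) A :
  (forall B, 0 <= m1 B) -> (forall C, 0 <= m2 C) ->
  focal (dempster_unnorm m1 m2) A ->
  exists B C, [/\ focal m1 B, focal m2 C & A = B :&: C].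
Proof.
move=> m1_ge0 m2_ge0 /lt0r_neq0/eqP.
case/psumr_neq0P => [B _|B /andP[_ /lt0r_neq0/eqP]].
  by apply: sumr_ge0 => C _; apply: mulr_ge0.
case/psumr_neq0P => [C _|C /andP[/eqP <-]]; first exact: mulr_ge0.
by rewrite mulr_ge0_gt0 // => /andP[m1B m2C]; exists B, C.
Qed.

Lemma dempster_nonconflicting (m1 m2 : {set T} -> R) A :
  \sum_B m1 B = 1 -> \sum_C m2 C = 1 -> dempster_unnorm m1 m2 set0 = 0 ->
  dempster m1 m2 A = dempster_unnorm m1 m2 A.
Proof.
move=> m1_sum m2_sum conflict0.
have norm1 : \sum_(A' | A' != set0) dempster_unnorm m1 m2 A' = 1.
  by rewrite -(mulr1 1) -{1}m1_sum -m2_sum -sum_dempster_unnorm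
             [RHS](bigD1 set0) //= conflict0 add0r.
by rewrite /dempster norm1 divr1; case: eqP => // ->.
Qed.

Lemma prob_mass_vacuous : prob_mass (@vacuous R T).
Proof.
split=> [A|]; first by rewrite /vacuous; case: ifP.
by rewrite (bigD1 setT) //= big1 => [|A /negbTE nA]; rewrite /vacuous ?nA ?eqxx ?addr0.
Qed.

Section ConditionalEmbedding.
Variables (Pi : {set T}) (m : {set T} -> R).
Hypothesis m_mass : is_mass Pi m.

Lemma cond_embed_ge0 A : 0 <= cond_embed Pi m A.
Proof. by case: m_mass => _ m_ge0 _ _; apply: sumr_ge0. Qed.

Lemma sum_cond_embed : \sum_A cond_embed Pi m A = 1.
Proof.
case: m_mass => _ _ _ <-.
by rewrite [RHS](partition_big (fun E => E :|: ~: Pi) xpredT).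
Qed.

Lemma cond_embed_focal A :
  focal (cond_embed Pi m) A -> exists2 E, focal m E & A = E :|: ~: Pi.
Proof.
case: m_mass => _ m_ge0 _ _ /lt0r_neq0/eqP.
by case/psumr_neq0P => [E _|E /andP[/andP[_ /eqP <-] mE]] //; exists E.
Qed.

End ConditionalEmbedding.
End MassFunctions.

Section Refining.
Variables (Omega Theta : finType) (rho : Omega -> {set Theta}).

Lemma outer_red_bigcup (e : Omega -> {set Theta}) :
  (forall w, e w \subset rho w) -> (forall w, e w != set0) ->
  outer_red rho (\bigcup_w e w) = [set: Omega].
Proof.
move=> e_sub e_neq0; apply/setP => w; rewrite !inE.
have /set0Pn [x ex] := e_neq0 w.
apply/set0Pn; exists x; rewrite inE (subsetP (e_sub w)) //=.
by apply/bigcupP; exists w.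
Qed.

Lemma marginal_vacuous (R : realFieldType) (mu : {set Theta} -> R) :
  prob_mass mu -> (forall A, focal mu A -> outer_red rho A = [set: Omega]) ->
  forall B, marginal rho mu B = vacuous R B.
Proof.
move=> [mu_ge0 mu_sum] mu_full B.
have mu0 A : outer_red rho A != [set: Omega] -> mu A = 0.
  by move=> /eqP not_full; apply: focalN_eq0 => // /mu_full.
rewrite /marginal /vacuous; case: eqP => [->|not_full].
  rewrite -mu_sum [RHS](bigID (fun A => outer_red rho A == setT)) /=.
  by rewrite [X in _ + X]big1 ?addr0.
by apply: big1 => A /eqP red_A; apply: mu0; rewrite red_A; apply/eqP.
Qed.

Hypothesis rho_ref : refining rho.

Lemma setIU_compl_bigcup i (E : {set Theta}) (e : Omega -> {set Theta}) :
  E \subset rho i -> e i = rho i -> (forall j, e j \subset rho j) ->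
  (E :|: ~: rho i) :&: \bigcup_j e j = \bigcup_j (if j == i then E else e j).
Proof.
case: rho_ref => _ rho_disj _ sE ei e_sub.
rewrite big_distrr; apply: eq_bigr => j _ /=.
case: eqP => [->|/eqP nji].
  by rewrite ei setIUl [~: _ :&: _]setIC setICr setU0; apply/setIidPl.
apply/setIidPr; apply: subset_trans (subsetUr _ _).
by apply: subset_trans (e_sub j) _; rewrite -disjoints_subset rho_disj.
Qed.

End Refining.

Section Combination.
Variables (R : realFieldType) (Omega Theta : finType).
Variables (rho : Omega -> {set Theta}) (m : Omega -> {set Theta} -> R).
Hypotheses (rho_ref : refining rho) (m_mass : forall i, is_mass (rho i) (m i)).

Definition union_of_focals (s : seq Omega) (A : {set Theta}) :=
  exists e : Omega -> {set Theta},
    [/\ forall i, i \in s -> focal (m i) (e i),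
        forall i, i \notin s -> e i = rho i &
        A = \bigcup_i e i].

Lemma parts_nonempty_sub_block (s : seq Omega) (e : Omega -> {set Theta}) :
  (forall i, i \in s -> focal (m i) (e i)) -> (forall i, i \notin s -> e i = rho i) ->
  forall j, e j \subset rho j /\ e j != set0.
Proof.
case: rho_ref => rho_neq0 _ _ e_focal e_out j.
by case: (boolP (j \in s)) => [/e_focal|/e_out ->]; [apply: is_mass_focal|].
Qed.

Lemma union_of_focals_neq0 (i : Omega) s A : union_of_focals s A -> A != set0.
Proof.
case=> e [e_focal e_out ->].
have [_ /set0Pn [x ex]] := parts_nonempty_sub_block e_focal e_out i.
by apply/set0Pn; exists x; apply/bigcupP; exists i.
Qed.

Lemma union_of_focals_cons i (s : seq Omega) (E A : {set Theta}) :
  i \notin s -> focal (m i) E -> union_of_focals s A ->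
  union_of_focals (i :: s) ((E :|: ~: rho i) :&: A).
Proof.
move=> i_s mE [e [e_focal e_out ->]].
have e_block := parts_nonempty_sub_block e_focal e_out.
exists (fun j => if j == i then E else e j); split.
- by move=> j; rewrite inE; case: eqP => [-> //|_ /e_focal].
- by move=> j; rewrite inE negb_or => /andP[/negbTE -> /e_out].
- apply: setIU_compl_bigcup => //; last by move=> j; have [] := e_block j.
    by have [] := is_mass_focal (m_mass i) mE.
  exact: e_out.
Qed.

Lemma dempster_cond_embed_step i (s : seq Omega) (mu : {set Theta} -> R) :
  i \notin s -> prob_mass mu -> (forall A, focal mu A -> union_of_focals s A) ->
  prob_mass (dempster (cond_embed (rho i) (m i)) mu) /\
  forall A, focal (dempster (cond_embed (rho i) (m i)) mu) A -> union_of_focals (i :: s) A.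
Proof.
move=> i_s [mu_ge0 mu_sum] mu_focal.
set CE := cond_embed (rho i) (m i).
have CE_ge0 := cond_embed_ge0 (m_mass i).
have U_focal A : focal (dempster_unnorm CE mu) A -> union_of_focals (i :: s) A.
  case/(dempster_unnorm_focal CE_ge0 mu_ge0) => B [C [CE_B mu_C ->]].
  have [E mE ->] := cond_embed_focal (m_mass i) CE_B.
  exact: union_of_focals_cons (mu_focal C mu_C).
have conflict0 : dempster_unnorm CE mu set0 = 0.
  apply: focalN_eq0 (dempster_unnorm_ge0 _ CE_ge0 mu_ge0) _.
  by move=> /U_focal /(union_of_focals_neq0 i); rewrite eqxx.
have U_eq A : dempster CE mu A = dempster_unnorm CE mu A.
  exact: dempster_nonconflicting (sum_cond_embed (m_mass i)) mu_sum conflict0.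
split; last by move=> A; rewrite /focal U_eq; apply: U_focal.
split=> [A|]; first by rewrite U_eq dempster_unnorm_ge0.
under eq_bigr do rewrite U_eq.
by rewrite sum_dempster_unnorm sum_cond_embed // mu_sum mulr1.
Qed.

Lemma dempster_fold_cond_embed (s : seq Omega) : uniq s ->
  let mu := foldr (fun i acc => dempster (cond_embed (rho i) (m i)) acc)
                  (@vacuous R Theta) s in
  prob_mass mu /\ forall A, focal mu A -> union_of_focals s A.
Proof.
elim: s => [_|i s IH /andP[i_s /IH[]]] /=; last exact: dempster_cond_embed_step.
split=> [|A]; first exact: prob_mass_vacuous.
rewrite /focal /vacuous; case: eqP => [-> _|_]; last by rewrite ltxx.
by case: rho_ref => _ _ rho_cover; exists rho; split.
Qed.

End Combination.

Theorem lemma3 (R : realFieldType) (Omega Theta : finType)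
  (rho : Omega -> {set Theta}) (m : Omega -> {set Theta} -> R) :
  refining rho ->
  (forall i, is_mass (rho i) (m i)) ->
  let mB := dempster_all (fun i => cond_embed (rho i) (m i)) in
  (forall A : {set Theta}, focal mB A ->
     exists e : Omega -> {set Theta},
       (forall i, focal (m i) (e i)) /\ A = \bigcup_(i : Omega) e i) /\
  (forall B : {set Omega}, marginal rho mB B = vacuous R B).
Proof.
move=> rho_ref m_mass mB.
have [mB_prob mB_focal] := dempster_fold_cond_embed rho_ref m_mass (enum_uniq Omega).
split=> [A /mB_focal [e [e_focal _ ->]]|].
  by exists e; split=> // i; apply: e_focal; rewrite mem_enum.
apply: marginal_vacuous mB_prob _ => A /mB_focal [e [e_focal e_out ->]].
have e_block := parts_nonempty_sub_block rho_ref m_mass e_focal e_out.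
by apply: outer_red_bigcup => w; have [] := e_block w.
Qed.
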